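(* Let $\mathbf x=(k,S,\Lambda,\mathbf a)$ be an abelian group $k$-parameter which is full, i.e. $\Lambda={}^{k+1}({}^\omega S)$ (and $\mathbf a$ is arbitrary). If $U\subseteq{}^\omega S$ and $|U|\ge(|S|+\aleph_0)^{+(k+1)}$ (the $(k+1)$-st successor cardinal of $|S|+\aleph_0$), then $G_U$ is not free.
   Context: For a set $S$, ${}^\omega S$ is the set of all functions $\omega\to S$. An abelian group $k$-parameter is $\mathbf x=(k,S,\Lambda,\mathbf a)$ with $k<\omega$, $S$ a set, $\Lambda\subseteq {}^{k+1}({}^\omega S)$ (sequences $\bar\eta=\langle\eta_0,\dots,\eta_k\rangle$, $\eta_\ell\in{}^\omega S$) and $\mathbf a:\Lambda\times\omega\to\mathbb Z$, $\mathbf a_{\bar\eta,n}=\mathbf a(\bar\eta,n)$. For $\bar\eta\in\Lambda$, $m\le k$, $n<\omega$, $\bar\eta\upharpoonleft\langle m,n\rangle$ is the sequence obtained from $\bar\eta$ by replacing $\eta_m$ with $\eta_m\restriction n$. $\Lambda_m=\{\bar\eta\upharpoonleft\langle m,n\rangle:\bar\eta\in\Lambda,n<\omega\}$, $\Lambda_{\le k}=\bigcup_{m\le k}\Lambda_m$. $G_{\mathbf x}$ is the abelian group generated by $z$, $x_{\bar\nu}$ ($\bar\nu\in\Lambda_{\le k}$), $y_{\bar\eta,n}$ ($\bar\eta\in\Lambda,n<\omega$) freely except for the relations $(n!)y_{\bar\eta,n+1}=y_{\bar\eta,n}+\mathbf a_{\bar\eta,n}z+\sum_{m\le k}x_{\bar\eta\upharpoonleft\langle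 m,n\rangle}$ ($\bar\eta\in\Lambda$, $n<\omega$). For $U\subseteq{}^\omega S$, $G_U$ is the subgroup of $G_{\mathbf x}$ generated by $\{z\}\cup\{y_{\bar\eta,n}:\bar\eta\in\Lambda\cap{}^{k+1}U,n<\omega\}\cup\{x_{\bar\eta\upharpoonleft\langle m,n\rangle}:\bar\eta\in\Lambda\cap{}^{k+1}U,m\le k,n<\omega\}$. *)

From mathcomp Require Import all_boot all_algebra.
From mathcomp Require Import boolp.
From Stdlib Require List.
Set Implicit Arguments. Unset Strict Implicit. Unset Printing Implicit Defensive.
Import GRing.Theory.
Local Open Scope ring_scope.

Definition wseq (S : Type) := nat -> S.
Definition tup (k : nat) (S : Type) := 'I_k.+1 -> wseq S.

(* an entry of a sequence nu in Lambda_{<=k}: either a finite sequence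
   (eta_m restricted to n) or an omega-sequence *)
Inductive entry (S : Type) := EFin of seq S | EInf of wseq S.

Definition restr (k : nat) (S : Type) (eta : tup k S) (m : 'I_k.+1) (n : nat)
  : 'I_k.+1 -> entry S :=
  fun l => if l == m then EFin (mkseq (eta m) n) else EInf (eta l).

Inductive gen (k : nat) (S : Type) :=
| Gz
| Gx of ('I_k.+1 -> entry S)
| Gy of tup k S & nat.

(* elements of the free abelian group on the generators (only finitely
   supported ones will ever arise, as they are built as Z-spans of basis
   vectors) *)
Definition fab (k : nat) (S : Type) := gen k S -> int.

Definition ebas (k : nat) (S : Type) (g : gen k S) : fab k S :=
  fun h => if pselect (h = g) then 1 else 0.

Inductive zspan (k : nat) (S : Type) (A : fab k S -> Prop) : fab k S -> Prop :=
| zspan0 : zspan A (fun _ => 0)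
| zspan_add a v : A a -> zspan A v -> zspan A (fun g => a g + v g)
| zspan_sub a v : A a -> zspan A v -> zspan A (fun g => v g - a g).

(* The generators x_nu are indexed by Lambda_{<=k}; y_{eta,n} by Lambda x omega. *)
Definition valid_gen (k : nat) (S : Type) (Lam : tup k S -> Prop) (g : gen k S) : Prop :=
  match g with
  | Gz => True
  | Gx nu => exists eta m n, Lam eta /\ nu = restr eta m n
  | Gy eta _ => Lam eta
  end.

Definition relvec (k : nat) (S : Type) (a : tup k S -> nat -> int)
  (eta : tup k S) (n : nat) : fab k S :=
  fun g => (n`!)%:Z * ebas (Gy eta n.+1) g - ebas (Gy eta n) g
           - a eta n * ebas (@Gz k S) g
           - \sum_(m < k.+1) ebas (Gx (restr eta m n)) g.

Definition relations (k : nat) (S : Type) (Lam : tup k S -> Prop)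
  (a : tup k S -> nat -> int) : fab k S -> Prop :=
  fun v => exists eta n, Lam eta /\ v = relvec a eta n.

(* G_x is the free abelian group on the valid generators modulo
   R := zspan relations; an element v of the free group represents the coset
   v + R, and two elements are equal in G_x iff their difference lies in R. *)
Definition Rsub (k : nat) (S : Type) (Lam : tup k S -> Prop)
  (a : tup k S -> nat -> int) : fab k S -> Prop :=
  zspan (relations Lam a).

Definition genU (k : nat) (S : Type) (Lam : tup k S -> Prop)
  (U : wseq S -> Prop) : fab k S -> Prop :=
  fun v => v = ebas (@Gz k S)
    \/ (exists eta n, Lam eta /\ (forall l, U (eta l)) /\ v = ebas (Gy eta n))
    \/ (exists eta m n, Lam eta /\ (forall l, U (eta l))
                          /\ v = ebas (Gx (restr eta m n))).

(* G_U is free: it has a Z-basis (b_i)_{i in I}, i.e. elements of G_U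
   (represented by lifts in the span of the generators of G_U) such that
   every element of G_U is a finite Z-combination of them (modulo R), and
   no nontrivial finite Z-combination vanishes in G_x. *)
Definition comb (k : nat) (S : Type) (I : Type) (b : I -> fab k S)
  (s : list I) (c : I -> int) : fab k S :=
  fun g => \sum_(i <- s) c i * b i g.

Definition GU_free (k : nat) (S : Type) (Lam : tup k S -> Prop)
  (a : tup k S -> nat -> int) (U : wseq S -> Prop) : Prop :=
  exists (I : Type) (b : I -> fab k S),
    (forall i, zspan (genU Lam U) (b i))
    /\ (forall u, zspan (genU Lam U) u ->
          exists (s : list I) (c : I -> int),
            Rsub Lam a (fun g => u g - comb b s c g))
    /\ (forall (s : list I) (c : I -> int), List.NoDup s ->
          Rsub Lam a (comb b s c) -> forall i, List.In i s -> c i = 0).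

Definition inj_into (T T' : Type) (X : T -> Prop) (Y : T' -> Prop) : Prop :=
  exists f : T -> T', (forall x, X x -> Y (f x))
    /\ (forall x y, X x -> X y -> f x = f y -> x = y).

(* card_ge_succ S n X  <->  |X| >= (|S| + aleph_0)^{+n}  (X a set of omega-sequences).
   n = 0:  |X| >= |S| + aleph_0  iff  S and nat inject into X.
   n+1:    |X| >= mu^+  iff  |X| > mu  iff  some Y subset X has |Y| >= mu
           and X does not inject into Y. *)
Fixpoint card_ge_succ (S : Type) (n : nat) (X : wseq S -> Prop) : Prop :=
  match n with
  | 0 => inj_into (fun _ : S => True) X /\ inj_into (fun _ : nat => True) X
  | n'.+1 => exists Y : wseq S -> Prop,
      (forall x, Y x -> X x) /\ card_ge_succ n' Y /\ ~ inj_into X Y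
  end.

(* Suppose [G_U] had a basis. Expanding the generators [y_(eta,n)], [x_nu], [z] of
   [G_U] in it gives integer coordinate vectors satisfying the defining relations
   coordinatewise. The functional sending [y_(eta,n)] to [1/(0! 1! ... (n-1)!)] and all
   other generators to [0] kills the relations; its values [w_eta] on the basis pair to
   [1] with the coordinates of [y_(eta,0)], and [w_eta] vanishes on every basis element
   whose (finite) support misses an entry of [eta].
   The entries are then removed one at a time. Given such a system on [U] with
   [|U| >= lambda^+(d+1)], take [Y] in [U] with [|Y| >= lambda^+d] such that [U] does not
   inject into [Y], close [Y] to a set [W] of the same size containing the supports of
   all basis elements occurring in [z] or in some [x_nu] restricted at the last entry
   with the other entries in [W], and pick [r] in [U] outside [W]. Fixing the last entry
   to [r] and discarding those basis elements gives a system on [Y] with one entry less: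
   the discarded elements carry the [z]-term and the [x]-terms restricted at the last
   entry, and they have weight [0] at every [eta] ending in [r]. With no entries left
   the relations read [n! Y_(n+1) = Y_n], so the coordinates of [y_0] are divisible by
   every [n!], hence zero, which contradicts the pairing being [1]. The closure step
   needs [|A * A| = |A|] for infinite [A] and the comparability of cardinals, both
   proved with Zorn's lemma. *)

From mathcomp Require Import all_boot all_algebra.
From mathcomp Require Import boolp ring.
From mathcomp Require classical_sets.
Set Implicit Arguments. Unset Strict Implicit. Unset Printing Implicit Defensive.

(** * Comparing cardinalities *)

Section InjInto.
Variables (T1 T2 T3 : Type).
Implicit Types (X : T1 -> Prop) (Y : T2 -> Prop) (Z : T3 -> Prop).

Lemma inj_into_trans X Y Z : inj_into X Y -> inj_into Y Z -> inj_into X Z.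
Proof.
move=> [f [fXY f_inj]] [g [gYZ g_inj]]; exists (fun x => g (f x)).
split=> [x /fXY/gYZ //|x y Xx Xy /g_inj]; move=> /(_ (fXY _ Xx) (fXY _ Xy)).
exact: f_inj.
Qed.

Lemma inj_into_subl X X' Y : (forall x, X x -> X' x) -> inj_into X' Y -> inj_into X Y.
Proof.
by move=> XX' [f [fX'Y f_inj]]; exists f; split=> [x /XX'/fX'Y|x y /XX' + /XX']//; apply: f_inj.
Qed.

Lemma inj_into_subr X Y Y' : (forall y, Y y -> Y' y) -> inj_into X Y -> inj_into X Y'.
Proof. by move=> YY' [f [fXY f_inj]]; exists f; split=> // x /fXY/YY'. Qed.

Lemma inj_into_refl X : inj_into X X.
Proof. by exists id. Qed.

Lemma inj_into_image (K : Type) (P : K -> Prop) (F : K -> T1) X Y (y0 : T2) :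
  (forall x, X x -> exists2 k, P k & F k = x) -> inj_into P Y -> inj_into X Y.
Proof.
move=> XF [e [ePY e_inj]].
have /choice[g gP] : forall x, exists y, X x -> exists k, [/\ P k, F k = x & e k = y].
  move=> x; case: (pselect (X x)) => [/XF[k Pk Fk]|nXx]; first by exists (e k); exists k.
  by exists y0.
exists g; split=> [x /gP[k [/ePY + _ <-]]//|x x' /gP[k [Pk Fk <-]] /gP[k' [Pk' Fk' <-]]].
by move=> /e_inj E; rewrite -Fk -Fk' E.
Qed.
End InjInto.

Definition pred_prod (T1 T2 : Type) (P1 : T1 -> Prop) (P2 : T2 -> Prop) (p : T1 * T2) :=
  P1 p.1 /\ P2 p.2.

Definition pred_sum (T1 T2 : Type) (P1 : T1 -> Prop) (P2 : T2 -> Prop) (s : T1 + T2) :=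
  match s with inl x => P1 x | inr y => P2 y end.

Definition pred_seq (T : Type) (P : T -> Prop) (s : seq T) := forall x, List.In x s -> P x.

Lemma mem_In (T : eqType) (x : T) s : x \in s -> List.In x s.
Proof. by elim: s => [//|y s IHs]; rewrite in_cons => /orP[/eqP->|/IHs]; [left | right]. Qed.

Lemma In_mem (T : eqType) (x : T) s : List.In x s -> x \in s.
Proof. by elim: s => [//|y s IHs] /= [->|/IHs]; rewrite in_cons ?eqxx // => ->; rewrite orbT. Qed.

Lemma In_map (A : eqType) (B : Type) (f : A -> B) s x : x \in s -> List.In (f x) (map f s).
Proof. by elim: s => [//|y s IHs]; rewrite in_cons => /orP[/eqP->|/IHs]; [left | right]. Qed.

Lemma In_mapP (A B : Type) (f : A -> B) s y :
  List.In y (map f s) -> exists2 x, List.In x s & y = f x.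
Proof.
elim: s => [//|x s IHs] /= [<-|/IHs[z zs ->]]; first by exists x; first left.
by exists z; first right.
Qed.

Lemma In_nth (T : Type) (t0 : T) s x : List.In x s -> exists q, nth t0 s q = x.
Proof. by elim: s => [//|y s IHs] /= [->|/IHs[q <-]]; [exists 0%N | exists q.+1]. Qed.

Lemma uniq_NoDup (T : eqType) (s : seq T) : uniq s -> List.NoDup s.
Proof.
elim: s => [|x s IHs] /=; first by constructor.
by move=> /andP[xs /IHs]; constructor=> // /In_mem; apply/negP.
Qed.

Lemma inj_into_prod_map (T1 T2 T3 T4 : Type) (P1 : T1 -> Prop) (P2 : T2 -> Prop)
    (Q1 : T3 -> Prop) (Q2 : T4 -> Prop) :
  inj_into P1 Q1 -> inj_into P2 Q2 -> inj_into (pred_prod P1 P2) (pred_prod Q1 Q2).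
Proof.
move=> [f [fPQ f_inj]] [g [gPQ g_inj]]; exists (fun p => (f p.1, g p.2)).
split=> [p [/fPQ ? /gPQ ?]//|[x y] [x' y'] [/= Px Py] [/= Px' Py'] [/f_inj + /g_inj]].
by move=> /(_ Px Px') -> /(_ Py Py') ->.
Qed.

Definition chain (T : Type) (F : (T -> Prop) -> Prop) :=
  forall G1 G2, F G1 -> F G2 -> (forall t, G1 t -> G2 t) \/ (forall t, G2 t -> G1 t).

Definition chain_union (T : Type) (F : (T -> Prop) -> Prop) (t : T) := exists2 G, F G & G t.

Lemma chain_union2 (T : Type) (F : (T -> Prop) -> Prop) s t : chain F ->
  chain_union F s -> chain_union F t -> exists2 G, F G & G s /\ G t.
Proof.
move=> Fch [G1 FG1 G1s] [G2 FG2 G2t].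
case: (Fch _ _ FG1 FG2) => [G12|G21]; first by exists G2 => //; split=> //; apply: G12.
by exists G1 => //; split=> //; apply: G21.
Qed.

Definition maximal (T : Type) (P : (T -> Prop) -> Prop) (M : T -> Prop) :=
  P M /\ forall G, (forall t, M t -> G t) -> (exists t, G t /\ ~ M t) -> ~ P G.

Lemma zorn (T : Type) (P : (T -> Prop) -> Prop) :
  (forall F, (forall G, F G -> P G) -> chain F -> P (chain_union F)) ->
  exists M, maximal P M.
Proof.
move=> Pch; have [M [PM Mmax]] := classical_sets.Zorn_bigcup (fun F FP Ft => Pch F FP Ft).
exists M; split=> // G MG [t [Gt Mt]] PG.
by apply: (Mmax G) => //; split=> // /(_ t Gt).
Qed.

Section PartialBijection.
Variables (T1 T2 : Type) (X : T1 -> Prop) (Y : T2 -> Prop).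

Definition partial_bij (G : T1 * T2 -> Prop) :=
  (forall p, G p -> X p.1 /\ Y p.2) /\
  (forall p q, G p -> G q -> (p.1 = q.1 <-> p.2 = q.2)).

Lemma partial_bij_chain F :
  (forall G, F G -> partial_bij G) -> chain F -> partial_bij (chain_union F).
Proof.
move=> FP Fch; split=> [p [G /FP[GXY _] /GXY]//|p q Fp Fq].
by have [G /FP[_ Gbij] [Gp Gq]] := chain_union2 Fch Fp Fq; apply: Gbij.
Qed.

Lemma partial_bij_add G x y : partial_bij G -> X x -> Y y ->
  (forall y', ~ G (x, y')) -> (forall x', ~ G (x', y)) ->
  partial_bij (fun p => G p \/ p = (x, y)).
Proof.
move=> [GXY Gbij] Xx Yy xG Gy; split=> [p [/GXY //|->]//|].
move=> [s t] [s' t'] [Gp|[-> ->]] [Gq|[-> ->]] /=; first exact: (Gbij _ _ Gp Gq).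
- by split=> E; [case: (xG t); rewrite -E | case: (Gy s); rewrite -E].
- by split=> E; [case: (xG t'); rewrite E | case: (Gy s'); rewrite E].
- by [].
Qed.

Lemma partial_bij_total G (y0 : T2) : partial_bij G ->
  (forall x, X x -> exists y, G (x, y)) -> inj_into X Y.
Proof.
move=> [GXY Gbij] Gtot.
have /choice[f Gf] : forall x, exists y, X x -> G (x, y).
  move=> x; case: (pselect (X x)) => [/Gtot[y Gxy]|nXx]; first by exists y.
  by exists y0.
exists f; split=> [x /Gf/GXY[]//|x x' /Gf Gx /Gf Gx' E].
exact: (Gbij _ _ Gx Gx').2.
Qed.
End PartialBijection.

Lemma partial_bij_flip (T1 T2 : Type) (X : T1 -> Prop) (Y : T2 -> Prop) G :
  partial_bij X Y G -> partial_bij Y X (fun p => G (p.2, p.1)).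
Proof.
move=> [GXY Gbij]; split=> [p /GXY[]//|p q Gp Gq].
exact: (iff_sym (Gbij _ _ Gp Gq)).
Qed.

Lemma inj_into_total (T1 T2 : Type) (X : T1 -> Prop) (Y : T2 -> Prop) :
  inj_into X Y \/ inj_into Y X.
Proof.
case: (pselectT T2) => [T2_0|y0]; first by right; exists (fun y => match T2_0 y with end).
case: (pselectT T1) => [T1_0|x0]; first by left; exists (fun x => match T1_0 x with end).
have [M [Mbij Mmax]] := zorn (@partial_bij_chain _ _ X Y).
case: (pselect (forall x, X x -> exists y, M (x, y))) => [Mdom|/existsNP[x]].
  by left; exact: (partial_bij_total y0 Mbij Mdom).
move=> /not_implyP[Xx xM]; right.
apply: (partial_bij_total x0 (partial_bij_flip Mbij)) => y Yy.
apply: contrapT => My.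
have xyM : ~ M (x, y) by move=> Mxy; apply: xM; exists y.
apply: (Mmax (fun p => M p \/ p = (x, y))); first by move=> p Mp; left.
  by exists (x, y); split; first by right.
apply: partial_bij_add => // [y' Mxy'|x' Mx'y]; first by apply: xM; exists y'.
by apply: My; exists x'.
Qed.

Section Coding.
Variables (T : Type) (E : T -> Prop).
Hypotheses (E_inf : inj_into (fun _ : nat => True) E)
  (E_sq : inj_into (pred_prod E E) E).

Lemma inj_into_prod (T1 T2 : Type) (P1 : T1 -> Prop) (P2 : T2 -> Prop) :
  inj_into P1 E -> inj_into P2 E -> inj_into (pred_prod P1 P2) E.
Proof. by move=> P1E P2E; exact: (inj_into_trans (inj_into_prod_map P1E P2E) E_sq). Qed.

Lemma inj_into_sum (T1 T2 : Type) (P1 : T1 -> Prop) (P2 : T2 -> Prop) :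
  inj_into P1 E -> inj_into P2 E -> inj_into (pred_sum P1 P2) E.
Proof.
move=> [f1 [f1E f1_inj]] [f2 [f2E f2_inj]].
apply: (inj_into_trans _ (inj_into_prod E_inf (inj_into_refl E))).
exists (fun s => match s with inl x => (0, f1 x) | inr y => (1, f2 y) end).
split=> [[x /f1E|y /f2E]//|[x|y] [x'|y'] //= P P' [E']]; first by rewrite (f1_inj _ _ P P' E').
by rewrite (f2_inj _ _ P P' E').
Qed.

Lemma inj_into_union (T' : Type) (P Q : T' -> Prop) :
  inj_into P E -> inj_into Q E -> inj_into (fun t => P t \/ Q t) E.
Proof.
move=> PE QE; have [n0 _] := E_inf.
apply: (inj_into_image (P := pred_sum P Q)
  (F := fun s => match s with inl t => t | inr t => t end) (n0 0)); last first.
  exact: inj_into_sum.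
by move=> t [Pt|Qt]; [exists (inl t) | exists (inr t)].
Qed.

Lemma inj_into_bigcup (T' : Type) (W : nat -> T' -> Prop) :
  (forall j, inj_into (W j) E) -> inj_into (fun t => exists j, W j t) E.
Proof.
move=> /choice[h hW]; have [n0 _] := E_inf.
apply: (inj_into_image (P := fun p : nat * T' => W p.1 p.2) (F := snd) (n0 0)).
  by move=> t [j Wjt]; exists (j, t).
apply: (inj_into_trans _ (inj_into_prod E_inf (inj_into_refl E))).
exists (fun p => (p.1, h p.1 p.2)); split=> [[j t] /(hW j).1|[j t] [j' t'] /= Wt Wt' [Ej]] //.
by subst j'; move=> /((hW j).2 _ _ Wt Wt') ->.
Qed.

Lemma inj_into_seq (K : Type) (P : K -> Prop) : inj_into P E -> inj_into (pred_seq P) E.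
Proof.
move=> PE; have [n0 [n0E _]] := E_inf.
pose layer n (s : seq K) := pred_seq P s /\ size s = n.
apply: (inj_into_subl (X' := fun s => exists n, layer n s)); first by move=> s Ps; exists (size s).
apply: inj_into_bigcup; elim=> [|n IHn].
  exists (fun _ => n0 0); split=> [s _|]; first exact: n0E.
  by move=> [|? ?] [|? ?] [_ +] [_ +].
apply: (inj_into_image (P := pred_prod P (layer n)) (F := fun p => p.1 :: p.2) (n0 0)).
  move=> [|x s] [Ps] //= [sn]; exists (x, s) => //; split=> [|/=]; first by apply: Ps; left.
  by split=> // y ys; apply: Ps; right.
exact: inj_into_prod.
Qed.
End Coding.

Section Hessenberg.
Variables (T : Type) (A : T -> Prop) (n0 : nat -> T).
Hypotheses (n0A : forall i, A (n0 i)) (n0_inj : injective n0).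

Definition diag_dom (G : T * T * T -> Prop) (t : T) := exists y, G ((t, t), y).

(* [G] is the graph of an injection of [B * B] into [B], where [B := diag_dom G]
   is a subset of [A] that is either empty or contains the copy [n0] of [nat]. *)
Definition square_code (G : T * T * T -> Prop) :=
  [/\ forall q, G q -> [/\ diag_dom G q.1.1, diag_dom G q.1.2 & diag_dom G q.2],
      forall t, diag_dom G t -> A t,
      (forall t, ~ diag_dom G t) \/ (forall i, diag_dom G (n0 i)),
      forall s t, diag_dom G s -> diag_dom G t -> exists y, G ((s, t), y) &
      forall q q', G q -> G q' -> (q.1 = q'.1 <-> q.2 = q'.2)].

Lemma diag_dom_chain F t :
  diag_dom (chain_union F) t <-> exists2 G, F G & diag_dom G t.
Proof.
split=> [[y [G FG Gy]]|[G FG [y Gy]]]; first by exists G => //; exists y.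
by exists y; exists G.
Qed.

Lemma square_code_chain F :
  (forall G, F G -> square_code G) -> chain F -> square_code (chain_union F).
Proof.
move=> Fcode Fch; split.
- move=> q [G FG Gq]; have [Gdom _ _ _ _] := Fcode G FG.
  by have [? ? ?] := Gdom q Gq; split; apply/diag_dom_chain; exists G.
- by move=> t /diag_dom_chain[G /Fcode[_ GA _ _ _]]; apply: GA.
- case: (pselect (exists t, diag_dom (chain_union F) t)) => [[t]|Fdom0]; last first.
    by left=> t Ft; apply: Fdom0; exists t.
  move=> /diag_dom_chain[G FG Gt]; have [_ _ [/(_ t Gt)//|Gn0] _ _] := Fcode G FG.
  right=> i.
  by apply/diag_dom_chain; exists G.
- move=> s t [ys Fs] [yt Ft]; have [G FG [Gs Gt]] := chain_union2 Fch Fs Ft.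
  have [_ _ _ Gtot _] := Fcode G FG.
  by have [y Gy] := Gtot s t (ex_intro _ ys Gs) (ex_intro _ yt Gt); exists y; exists G.
- move=> q q' Fq Fq'; have [G FG [Gq Gq']] := chain_union2 Fch Fq Fq'.
  by have [_ _ _ _ Ginj] := Fcode G FG; apply: Ginj.
Qed.

Lemma square_code_inj G : square_code G ->
  inj_into (pred_prod (diag_dom G) (diag_dom G)) (diag_dom G).
Proof.
move=> [Gdom _ _ Gtot Ginj].
have /choice[g Gg] : forall p, exists y, pred_prod (diag_dom G) (diag_dom G) p -> G (p, y).
  move=> [s t]; case: (pselect (diag_dom G s /\ diag_dom G t)) => [[Gs Gt]|nGst].
    by have [y Gy] := Gtot s t Gs Gt; exists y.
  by exists (n0 0).
exists g; split=> [p /Gg/Gdom[]//|p p' /Gg Gp /Gg Gp' E].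
exact: (Ginj _ _ Gp Gp').2.
Qed.

Definition seed_code (q : T * T * T) := exists i j, q = ((n0 i, n0 j), n0 (pickle (i, j))).

Lemma diag_dom_seed i : diag_dom seed_code (n0 i).
Proof. by exists (n0 (pickle (i, i))); exists i, i. Qed.

Lemma square_code_seed : square_code seed_code.
Proof.
split.
- by move=> q [i [j ->]]; split; apply: diag_dom_seed.
- by move=> t [y [i [j [-> _ _]]]]; apply: n0A.
- by right; apply: diag_dom_seed.
- move=> s t [y [i [_ [-> _ _]]]] [y' [j [_ [-> _ _]]]].
  by exists (n0 (pickle (i, j))); exists i, j.
- move=> q q' [i [j ->]] [i' [j' ->]] /=; split=> [[/n0_inj -> /n0_inj ->]//|].
  by move=> /n0_inj /(pcan_inj pickleK) [-> ->].
Qed.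

Section Grow.
Variables (M : T * T * T -> Prop) (C : T -> Prop) (f : T * T -> T).
Let B := diag_dom M.
Let BC t := B t \/ C t.
Hypotheses (Mcode : square_code M) (CA : forall c, C c -> A c) (CB : forall c, C c -> ~ B c)
  (fC : forall p, pred_prod BC BC p -> C (f p))
  (f_inj : forall p p', pred_prod BC BC p -> pred_prod BC BC p' -> f p = f p' -> p = p').

Definition grow q := M q \/ [/\ BC q.1.1, BC q.1.2, ~ (B q.1.1 /\ B q.1.2) & q.2 = f q.1].

Lemma diag_dom_grow t : diag_dom grow t <-> BC t.
Proof.
have [Mdom _ _ Mtot _] := Mcode.
split=> [[y [/Mdom[]|[]]]|[Bt|Ct]]; [by left | by [] | |].
  by have [y My] := Mtot t t Bt Bt; exists y; left.
by exists (f (t, t)); right; split=> //; [right | right | case=> /CB].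
Qed.

Lemma square_code_grow : (forall i, B (n0 i)) -> square_code grow.
Proof.
move=> Bn0; have [Mdom MA _ Mtot Minj] := Mcode.
have new_old q q' : M q -> [/\ BC q'.1.1, BC q'.1.2, ~ (B q'.1.1 /\ B q'.1.2) & q'.2 = f q'.1] ->
    q.1 <> q'.1 /\ q.2 <> q'.2.
  move=> /Mdom[Bq1 Bq2 Bq] [BCq1 BCq2 nBq' ->]; split=> [E|E]; first by apply: nBq'; rewrite -E.
  by apply: (CB (fC (conj BCq1 BCq2))); rewrite -E.
split.
- move=> q [/Mdom[? ? ?]|[BCq1 BCq2 _ ->]]; first by split; apply/diag_dom_grow; left.
  by split; apply/diag_dom_grow => //; right; apply: fC.
- by move=> t /diag_dom_grow[/MA|/CA].
- by right=> i; apply/diag_dom_grow; left.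
- move=> s t /diag_dom_grow BCs /diag_dom_grow BCt.
  case: (pselect (B s /\ B t)) => [[Bs Bt]|nBst]; last by exists (f (s, t)); right.
  by have [y My] := Mtot s t Bs Bt; exists y; left.
- move=> q q' [Mq|Nq] [Mq'|Nq']; first exact: Minj.
  + by have [] := new_old _ _ Mq Nq'.
  + by have [? ?] := new_old _ _ Mq' Nq; split=> E; exfalso; auto.
  + case: Nq Nq' => [BCq1 BCq2 _ ->] [BCq1' BCq2' _ ->].
    split=> [-> //|/f_inj]; apply; split=> //.
Qed.
End Grow.

Lemma inj_into_square : inj_into (pred_prod A A) A.
Proof.
have [M [Mcode Mmax]] := zorn square_code_chain.
pose B := diag_dom M.
have [Mdom MA Mn0 _ _] := Mcode.
have Bn0 i : B (n0 i).
  case: Mn0 => [Bempty|]; last by apply.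
  exfalso; apply: (Mmax _ _ _ square_code_seed) => [q /Mdom[/Bempty]//|].
  by exists ((n0 0, n0 0), n0 (pickle (0, 0))); split; [exists 0, 0 | case/Mdom=> /Bempty].
have B_inf : inj_into (fun _ : nat => True) B.
  by exists n0; split=> [m _|m m' _ _ /n0_inj //]; apply: Bn0.
have B_sq := square_code_inj Mcode.
(* Either [A] is no larger than [B], or [M] extends to [B] plus a disjoint copy of [B]. *)
case: (inj_into_total (fun t => A t /\ ~ B t) B) => [AB|[h [hAB h_inj]]].
  have AinB : inj_into A B.
    apply: inj_into_subl (inj_into_union B_inf B_sq (inj_into_refl B) AB) => t At.
    by case: (pselect (B t)) => Bt; [left | right].
  apply: (inj_into_trans (inj_into_prod B_sq AinB AinB)).
  by apply: inj_into_subr (inj_into_refl B) => t /MA.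
pose C t := exists2 b, B b & t = h b.
have BC_B : inj_into (fun t => B t \/ C t) B.
  apply: (inj_into_union B_inf B_sq (inj_into_refl B)).
  apply: (inj_into_image (P := B) (F := h) (n0 0)) (inj_into_refl B).
  by move=> t [b Bb ->]; exists b.
have BCC : inj_into (pred_prod (fun t => B t \/ C t) (fun t => B t \/ C t)) C.
  apply: inj_into_trans (inj_into_prod B_sq BC_B BC_B) _.
  by exists h; split=> [b Bb|]; [exists b | exact: h_inj].
have [f [fC f_inj]] := BCC.
have [CA CB] : (forall c, C c -> A c) /\ (forall c, C c -> ~ B c).
  by split=> c [b /hAB[Ahb nBhb] ->].
exfalso; apply: (Mmax (grow M C f)); first by move=> q Mq; left.
  have Ch : C (h (n0 0)) by exists (n0 0).
  exists ((h (n0 0), h (n0 0)), f (h (n0 0), h (n0 0))).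
  split; [right; split=> //; [right | right | case=> /CB] | case/Mdom=> /CB] => //.
exact: square_code_grow.
Qed.
End Hessenberg.

Section Closure.
Variables (T : Type) (E : T -> Prop) (step : (T -> Prop) -> T -> Prop).
Hypotheses (E_inf : inj_into (fun _ : nat => True) E)
  (E_sq : inj_into (pred_prod E E) E)
  (step_finitary : forall W c, step W c -> exists l, pred_seq W l /\
     forall W', pred_seq W' l -> step W' c)
  (step_small : forall W, inj_into W E -> inj_into (step W) E).

Fixpoint iter_step (Y : T -> Prop) (j : nat) : T -> Prop :=
  if j is j'.+1 then fun c => iter_step Y j' c \/ step (iter_step Y j') c else Y.

Lemma iter_step_mono Y i j t : i <= j -> iter_step Y i t -> iter_step Y j t.
Proof. by move=> /subnK <-; elim: (j - i) => [|d IHd] //= /IHd; left. Qed.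

Lemma pred_seq_iter_step Y l : pred_seq (fun t => exists j, iter_step Y j t) l ->
  exists j, pred_seq (iter_step Y j) l.
Proof.
elim: l => [|x l IHl] Pl; first by exists 0.
have [j Pj] := IHl (fun y yl => Pl y (or_intror yl)).
have [i Yix] := Pl x (or_introl erefl).
exists (maxn i j) => y [<-|yl]; first exact: iter_step_mono (leq_maxl i j) Yix.
exact: iter_step_mono (leq_maxr i j) (Pj y yl).
Qed.

Lemma exists_closure Y : inj_into Y E ->
  exists W, [/\ forall t, Y t -> W t, inj_into W E & forall c, step W c -> W c].
Proof.
move=> YE; exists (fun t => exists j, iter_step Y j t); split; first by move=> t Yt; exists 0.
  apply: (inj_into_bigcup E_inf E_sq); elim=> [|j IHj] //=.
  exact: (inj_into_union E_inf E_sq IHj (step_small IHj)).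
move=> c /step_finitary[l [/pred_seq_iter_step[j Yjl] Sc]].
by exists j.+1; right; apply: Sc.
Qed.
End Closure.

(** * Formal integer combinations *)

Import GRing.Theory Num.Theory.
Local Open Scope ring_scope.

Definition scale_fs (T : Type) (z : int) (l : seq (T * int)) := [seq (x.1, z * x.2) | x <- l].

Definition pairing (T : Type) (l : seq (T * int)) (w : T -> rat) : rat :=
  \sum_(x <- l) x.2%:~R * w x.1.

Section Pairing.
Variable T : Type.
Implicit Types (l : seq (T * int)) (w : T -> rat).

Lemma pairing_cat (l1 l2 : seq (T * int)) w : pairing (l1 ++ l2) w = pairing l1 w + pairing l2 w.
Proof. by rewrite /pairing big_cat. Qed.

Lemma pairing_scale z l w : pairing (scale_fs z l) w = z%:~R * pairing l w.
Proof. by rewrite /pairing big_map mulr_sumr; apply: eq_bigr => x _; rewrite intrM mulrA. Qed.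
End Pairing.

Section FormalSums.
Variable I : eqType.
Implicit Types (l : seq (I * int)) (w : I -> rat).

Definition coef l i : int := \sum_(x <- l | x.1 == i) x.2.

Lemma big_group_fst (V : zmodType) (F : I * int -> V) l (u : seq I) : uniq u ->
  {subset map fst l <= u} -> \sum_(x <- l) F x = \sum_(t <- u) \sum_(x <- l | x.1 == t) F x.
Proof.
move=> u_uniq lu; under [RHS]eq_bigr do rewrite big_mkcond /=.
rewrite exchange_big /=; apply: eq_big_seq => x xl.
rewrite (bigD1_seq x.1) ?lu ?map_f //= eqxx big1 ?addr0 // => t.
by rewrite eq_sym => /negPf ->.
Qed.

Lemma coef_cat l1 l2 i : coef (l1 ++ l2) i = coef l1 i + coef l2 i.
Proof. by rewrite /coef big_cat. Qed.

Lemma coef_scale z l i : coef (scale_fs z l) i = z * coef l i.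
Proof. by rewrite /coef big_map mulr_sumr. Qed.

Lemma coef_notin l i : i \notin map fst l -> coef l i = 0.
Proof.
move=> il; rewrite /coef big1_seq // => x /andP[/eqP xi xl].
by case/negP: il; rewrite -xi map_f.
Qed.

Lemma coef_filter (P : pred I) l i :
  coef [seq x <- l | P x.1] i = if P i then coef l i else 0.
Proof.
rewrite /coef big_filter_cond; case: ifP => Pi.
  by apply: eq_bigl => x; case: eqP => [->|]; rewrite ?Pi ?andbF.
by rewrite big_pred0 // => x; case: eqP => [->|]; rewrite ?Pi ?andbF.
Qed.

Lemma pairing_coef l w : pairing l w = \sum_(t <- undup (map fst l)) (coef l t)%:~R * w t.
Proof.
rewrite /pairing (@big_group_fst _ _ l (undup (map fst l))) ?undup_uniq // => [|t]; last first.
  by rewrite mem_undup.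
apply: eq_bigr => t _; rewrite /coef rmorph_sum mulr_suml.
by apply: eq_bigr => x /eqP ->.
Qed.

Lemma pairing_coef0 l w : (forall i, coef l i = 0) -> pairing l w = 0.
Proof. by move=> l0; rewrite pairing_coef big1 // => t _; rewrite l0 mul0r. Qed.

Lemma pairing_filter (P : pred I) l w :
  (forall x, x \in l -> ~~ P x.1 -> w x.1 = 0) -> pairing [seq x <- l | P x.1] w = pairing l w.
Proof.
move=> lP; rewrite /pairing big_filter [RHS](bigID (fun x => P x.1)) /=.
rewrite [X in _ = _ + X]big_seq_cond [X in _ = _ + X]big1 ?addr0 // => x /andP[/lP w0 /w0 ->].
by rewrite mulr0.
Qed.
End FormalSums.

Definition subst_fs (A B : Type) (f : A -> seq (B * int)) (l : seq (A * int)) :=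
  flatten [seq scale_fs x.2 (f x.1) | x <- l].

Lemma coef_subst (A : Type) (B : eqType) (f : A -> seq (B * int)) l i :
  coef (subst_fs f l) i = \sum_(x <- l) x.2 * coef (f x.1) i.
Proof.
elim: l => [|x l IHl]; first by rewrite /coef !big_nil.
by rewrite /subst_fs /= coef_cat coef_scale big_cons -IHl.
Qed.

Lemma pairing_subst (A B : Type) (f : A -> seq (B * int)) l w :
  pairing (subst_fs f l) w = pairing l (fun a => pairing (f a) w).
Proof.
elim: l => [|x l IHl]; first by rewrite /pairing !big_nil.
by rewrite /subst_fs /= pairing_cat pairing_scale IHl [RHS]/pairing big_cons.
Qed.

Lemma fact_dvdz_eq0 (x : int) : (forall n, (n`!%:Z %| x)%Z) -> x = 0.
Proof.
move=> dvdx; apply/eqP; apply: contraT; rewrite -absz_gt0 => x0.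
have := dvdx `|x|.+1; rewrite dvdzE absz_nat => /(dvdn_leq x0).
by rewrite leqNgt fact_geq.
Qed.

Definition fact_prod n := (\prod_(j < n) j`!)%N.

Lemma fact_prodS n : fact_prod n.+1 = (fact_prod n * n`!)%N.
Proof. by rewrite /fact_prod big_ord_recr. Qed.

(** * Expansions and the induction on the number of entries *)

Section Expansion.
Variables (S : Type) (I : eqType).

Definition restr_at d (eta : 'I_d -> wseq S) (m : 'I_d) (n : nat) : 'I_d -> entry S :=
  fun l => if l == m then EFin (mkseq (eta m) n) else EInf (eta l).

Definition all_in d (U : wseq S -> Prop) (eta : 'I_d -> wseq S) := forall l, U (eta l).

(* Abstract form of a basis [I] of [G_U]: [Y eta n], [X nu] and [Z] are the coordinates
   of [y_(eta,n)], [x_nu] and [z], which satisfy the defining relations; [w eta] is the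
   value on the basis of a functional that kills the relations and maps [y_(eta,0)] to
   [1], and it vanishes on basis elements whose support [C i] misses an entry of [eta]. *)
Record expansion d (U : wseq S -> Prop) (Y : ('I_d -> wseq S) -> nat -> seq (I * int))
    (X : ('I_d -> entry S) -> seq (I * int)) (Z : seq (I * int))
    (a : ('I_d -> wseq S) -> nat -> int) (w : ('I_d -> wseq S) -> I -> rat)
    (C : I -> seq (wseq S)) : Prop := Expansion {
  expansion_rel : forall eta, all_in U eta -> forall n i,
    (n`!)%:Z * coef (Y eta n.+1) i
      = coef (Y eta n) i + a eta n * coef Z i + \sum_(m < d) coef (X (restr_at eta m n)) i;
  expansion_norm : forall eta, all_in U eta -> pairing (Y eta 0) (w eta) = 1;
  expansion_supp : forall eta i, all_in U eta -> w eta i != 0 ->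
    forall l, List.In (eta l) (C i) }.

Lemma expansion0_coef_Z U Y X Z a w C : @expansion 0 U Y X Z a w C ->
  ~ (forall i, coef Z i = 0).
Proof.
move=> [rel norm _] Z0; pose eta (l : 'I_0) : wseq S := False_rect _ (notF (ltn_ord l)).
have Ueta : all_in U eta by move=> l; case: (notF (ltn_ord l)).
have Y0 n i : coef (Y eta 0) i = (fact_prod n)%:Z * coef (Y eta n) i.
  elim: n => [|n IHn]; first by rewrite /fact_prod big_ord0 mul1r.
  by rewrite IHn fact_prodS PoszM -mulrA rel // Z0 big_ord0 mulr0 !addr0.
have /pairing_coef0 : forall i, coef (Y eta 0) i = 0.
  move=> i; apply: fact_dvdz_eq0 => n; rewrite (Y0 n.+1) fact_prodS PoszM.
  by apply/dvdz_mulr/dvdz_mull/dvdzz.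
by move=> /(_ (w eta)); rewrite norm // => /eqP; rewrite oner_eq0.
Qed.
End Expansion.

Section Snoc.
Variables (T : Type) (d : nat).

Definition snoc (nu : 'I_d -> T) (r : T) : 'I_d.+1 -> T :=
  fun l => if unlift ord_max l is Some l' then nu l' else r.

Lemma snoc_lift nu r l : snoc nu r (lift ord_max l) = nu l.
Proof. by rewrite /snoc liftK. Qed.

Lemma snoc_max nu r : snoc nu r ord_max = r.
Proof. by rewrite /snoc unlift_none. Qed.

Definition init_seq (eta : 'I_d.+1 -> T) := [seq eta (lift ord_max j) | j <- enum 'I_d].

Lemma nth_init_seq t0 eta (j : 'I_d) : nth t0 (init_seq eta) j = eta (lift ord_max j).
Proof. by rewrite (nth_map j) ?size_enum_ord // nth_ord_enum. Qed.
End Snoc.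

Lemma restr_at_snoc (S : Type) d (nu : 'I_d -> wseq S) r m n :
  restr_at (snoc nu r) (widen_ord (leqnSn d) m) n = snoc (restr_at nu m n) (EInf r).
Proof.
have -> : widen_ord (leqnSn d) m = lift ord_max m.
  by apply: val_inj; rewrite /= /bump leqNgt ltn_ord.
apply: funext => l; rewrite /restr_at snoc_lift.
case: (unliftP ord_max l) => [j ->|->]; first by rewrite !snoc_lift (inj_eq lift_inj).
by rewrite !snoc_max (negbTE (neq_lift _ _)).
Qed.

Definition restr_seq (S : Type) d (t0 : wseq S) (vs : seq (wseq S)) (ts : seq S) :
  'I_d.+1 -> entry S :=
  fun l => if unlift ord_max l is Some j then EInf (nth t0 vs j) else EFin ts.

Lemma restr_at_max (S : Type) d t0 (eta : 'I_d.+1 -> wseq S) n :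
  restr_at eta ord_max n = restr_seq t0 (init_seq eta) (mkseq (eta ord_max) n).
Proof.
apply: funext => l; rewrite /restr_at /restr_seq.
case: (unliftP ord_max l) => [j ->|->]; last by rewrite eqxx.
by rewrite eq_sym (negbTE (neq_lift _ _)) nth_init_seq.
Qed.

Lemma card_ge_succ_inf (S : Type) d (X : wseq S -> Prop) : card_ge_succ d X ->
  inj_into (fun _ : nat => True) X /\ inj_into (fun _ : S => True) X.
Proof.
elim: d X => [|d IHd] X /=; first by move=> [].
by move=> [Y [YX [/IHd[YN YS] _]]]; split; apply: inj_into_subr YX _.
Qed.

Section Peel.
Variables (S : Type) (I : eqType) (d : nat) (U : wseq S -> Prop).
Variables (Y : ('I_d.+1 -> wseq S) -> nat -> seq (I * int))
  (X : ('I_d.+1 -> entry S) -> seq (I * int)) (Z : seq (I * int))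
  (a : ('I_d.+1 -> wseq S) -> nat -> int) (w : ('I_d.+1 -> wseq S) -> I -> rat)
  (C : I -> seq (wseq S)).
Hypothesis sys : expansion U Y X Z a w C.

Definition touched (W : wseq S -> Prop) (i : I) :=
  i \in map fst Z \/ exists eta, [/\ all_in U eta, forall l, l != ord_max -> W (eta l)
    & exists n, i \in map fst (X (restr_at eta ord_max n))].

Definition spread (W : wseq S -> Prop) (c : wseq S) := exists2 i, touched W i & List.In c (C i).

Lemma spread_finitary W c : spread W c ->
  exists l, pred_seq W l /\ forall W', pred_seq W' l -> spread W' c.
Proof.
move=> [i [Zi|[eta [Ueta Weta [n Xi]]]] Ci].
  by exists [::]; split=> // W' _; exists i => //; left.
exists (init_seq eta); rewrite /init_seq; split=> [x|W' W'eta].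
  by move=> xl; have [j _ ->] := In_mapP xl; apply: Weta; rewrite eq_sym neq_lift.
exists i => //; right; exists eta; split=> // [l|]; last by exists n.
case: (unliftP ord_max l) => [j ->|->]; last by rewrite eqxx.
by move=> _; apply/W'eta/(In_map (fun j => eta (lift ord_max j))); rewrite mem_enum.
Qed.

Section Small.
Variable E : wseq S -> Prop.
Hypotheses (E_inf : inj_into (fun _ : nat => True) E) (E_sq : inj_into (pred_prod E E) E)
  (E_S : inj_into (fun _ : S => True) E).

Lemma touched_small W : inj_into W E -> inj_into (touched W) E.
Proof.
move=> WE; have [t0 _] := E_inf.
case: (pselectT I) => [I0|i0]; first by exists (fun i => match I0 i with end).
pose F (k : nat + (seq (wseq S) * seq S * nat)) := match k with
  | inl p => nth i0 (map fst Z) p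
  | inr (vs, ts, p) => nth i0 (map fst (X (restr_seq (t0 0%N) vs ts))) p end.
apply: (inj_into_image (P := pred_sum (fun _ => True)
  (pred_prod (pred_prod (pred_seq W) (fun _ => True)) (fun _ => True))) (F := F) (t0 0%N)).
  move=> i [Zi|[eta [_ Weta [n]]]].
    by exists (inl (index i (map fst Z))); rewrite //= nth_index.
  rewrite (restr_at_max (t0 0%N)); set vs := init_seq eta; set ts := mkseq _ n => Xi.
  exists (inr (vs, ts, index i (map fst (X (restr_seq (t0 0%N) vs ts))))).
    split=> //; split=> // x xl; have [j _ ->] := In_mapP xl.
    by apply: Weta; rewrite eq_sym neq_lift.
  by rewrite /= nth_index.
have seqS : inj_into (fun _ : seq S => True) E.
  by apply: inj_into_subl (inj_into_seq E_inf E_sq E_S).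
apply: (inj_into_sum E_inf E_sq E_inf).
exact: (inj_into_prod E_sq (inj_into_prod E_sq (inj_into_seq E_inf E_sq WE) seqS) E_inf).
Qed.

Lemma spread_small W : inj_into W E -> inj_into (spread W) E.
Proof.
move=> WE; have [t0 _] := E_inf.
apply: (inj_into_image (P := pred_prod (touched W) (fun _ : nat => True))
  (F := fun p => nth (t0 0%N) (C p.1) p.2) (t0 0%N)).
  by move=> c [i Wi /(In_nth (t0 0%N))[q <-]]; exists (i, q).
exact: (inj_into_prod E_sq (touched_small WE) E_inf).
Qed.
End Small.

Definition keep W i := ~~ `[< touched W i >].
Definition peel_Y W r (nu : 'I_d -> wseq S) n := [seq x <- Y (snoc nu r) n | keep W x.1].
Definition peel_X W r (mu : 'I_d -> entry S) := [seq x <- X (snoc mu (EInf r)) | keep W x.1].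
Definition peel_Z W := [seq x <- Z | keep W x.1].

Lemma coef_touched W l i : (forall x, x \in l -> touched W x.1) -> keep W i -> coef l i = 0.
Proof.
move=> lW; apply: contraNeq => li; apply/asboolP.
have /mapP[x xl ->] : i \in map fst l by apply: contraTT li => /coef_notin ->.
exact: lW.
Qed.

Lemma coef_peel_Z W i : coef (peel_Z W) i = 0.
Proof.
rewrite coef_filter; case: ifP => // /coef_touched -> // x xZ.
by left; apply: map_f.
Qed.

Section Restrict.
Variables (W Y1 : wseq S -> Prop) (r : wseq S).
Hypotheses (W_closed : forall c, spread W c -> W c) (Y1W : forall t, Y1 t -> W t)
  (Y1U : forall t, Y1 t -> U t) (Ur : U r) (nWr : ~ W r).

Lemma all_in_snoc (nu : 'I_d -> wseq S) : all_in Y1 nu -> all_in U (snoc nu r).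
Proof.
move=> Y1nu l; case: (unliftP ord_max l) => [j ->|->]; last by rewrite snoc_max.
by rewrite snoc_lift; apply: Y1U.
Qed.

Lemma expansion_peel : expansion Y1 (peel_Y W r) (peel_X W r) (peel_Z W)
  (fun nu => a (snoc nu r)) (fun nu => w (snoc nu r)) C.
Proof.
have [rel norm supp] := sys.
split=> [nu Y1nu n i|nu Y1nu|nu i Y1nu wi l].
- rewrite coef_peel_Z mulr0 addr0 !coef_filter; under eq_bigr do rewrite coef_filter.
  case: ifP => keep_i; last by rewrite big1 ?mulr0 // => m _; rewrite keep_i.
  rewrite rel; last exact: all_in_snoc.
  have Xmax : coef (X (restr_at (snoc nu r) ord_max n)) i = 0.
    apply: coef_touched keep_i => x xX; right; exists (snoc nu r).
    split; [exact: all_in_snoc | move=> l | by exists n; apply: map_f].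
    case: (unliftP ord_max l) => [j ->|->]; last by rewrite eqxx.
    by rewrite snoc_lift => _; apply: Y1W.
  have Z0 : coef Z i = 0 by apply: coef_touched keep_i => x xZ; left; apply: map_f.
  rewrite (big_ord_recr d) /= Xmax Z0 mulr0 !addr0; congr (_ + _).
  by apply: eq_bigr => m _; rewrite restr_at_snoc.
- rewrite /peel_Y pairing_filter => [|x _]; first exact/norm/all_in_snoc.
  rewrite /keep negbK => /asboolP Wx; apply/eqP; apply: contraT => wx; case: nWr.
  apply: W_closed; exists x.1 => //; rewrite -(snoc_max nu r).
  by apply: supp => //; exact: all_in_snoc.
- by rewrite -(snoc_lift nu r l); apply: supp => //; exact: all_in_snoc.
Qed.
End Restrict.

Lemma expansion_peel_card : card_ge_succ d.+1 U ->
  exists Y1 Y' X' Z' a' w', [/\ @expansion S I d Y1 Y' X' Z' a' w' C,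
    forall i, coef Z' i = 0 & card_ge_succ d Y1].
Proof.
move=> [Y1 [Y1U [cY1 nUY1]]]; have [Y1_inf Y1_S] := card_ge_succ_inf cY1.
have Y1_sq : inj_into (pred_prod Y1 Y1) Y1.
  by have [n0 [n0Y1 n0_inj]] := Y1_inf; apply: (inj_into_square (n0 := n0)) => [i|i j]; auto.
have [W [Y1W WY1 W_closed]] := exists_closure Y1_inf Y1_sq spread_finitary
  (spread_small Y1_inf Y1_sq Y1_S) (inj_into_refl Y1).
have [r Ur nWr] : exists2 r, U r & ~ W r.
  apply: contrapT => UW; apply/nUY1/(inj_into_subl _ WY1) => t Ut.
  by apply: contrapT => nWt; apply: UW; exists t.
exists Y1, (peel_Y W r), (peel_X W r), (peel_Z W), (fun nu => a (snoc nu r)).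
exists (fun nu => w (snoc nu r)).
by split=> //; [exact: expansion_peel | exact: coef_peel_Z].
Qed.
End Peel.

Lemma expansion_card (S : Type) (I : eqType) d U Y X Z a w C :
  @expansion S I d U Y X Z a w C -> (forall i, coef Z i = 0) -> ~ card_ge_succ d U.
Proof.
elim: d U Y X Z a w C => [|d IHd] U Y X Z a w C sys Z0 cU.
  exact: (expansion0_coef_Z sys Z0).
have [Y1 [Y' [X' [Z' [a' [w' [sys' Z'0 cY1]]]]]]] := expansion_peel_card sys cU.
exact: IHd sys' Z'0 cY1.
Qed.

Lemma expansion_succ_card (S : Type) (I : eqType) d U Y X Z a w C :
  @expansion S I d.+1 U Y X Z a w C -> ~ card_ge_succ d.+1 U.
Proof.
move=> sys /(expansion_peel_card sys)[Y1 [Y' [X' [Z' [a' [w' [sys' Z'0]]]]]]].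
exact: expansion_card sys' Z'0.
Qed.

(** * The groups [G_x] and [G_U] *)

Section Zspan.
Variables (k : nat) (S : Type) (A : fab k S -> Prop).
Implicit Types (u v : fab k S).

Lemma zspan_ext u v : zspan A u -> u =1 v -> zspan A v.
Proof. by move=> Au /funext <-. Qed.

Lemma zspan_gen u : A u -> zspan A u.
Proof. by move=> Au; apply: zspan_ext (zspan_add Au (zspan0 A)) _ => g; rewrite addr0. Qed.

Lemma zspanD u v : zspan A u -> zspan A v -> zspan A (fun g => u g + v g).
Proof.
elim=> [|x u' Ax _ IHu|x u' Ax _ IHu] Av.
- by apply: zspan_ext Av _ => g; rewrite add0r.
- by apply: zspan_ext (zspan_add Ax (IHu Av)) _ => g; rewrite addrA.
- by apply: zspan_ext (zspan_sub Ax (IHu Av)) _ => g; rewrite addrAC.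
Qed.

Lemma zspanN u : zspan A u -> zspan A (fun g => - u g).
Proof.
elim=> [|x u' Ax _ IHu|x u' Ax _ IHu].
- by apply: zspan_ext (zspan0 A) _ => g; rewrite oppr0.
- by apply: zspan_ext (zspan_sub Ax IHu) _ => g; rewrite opprD addrC.
- by apply: zspan_ext (zspan_add Ax IHu) _ => g; rewrite opprB addrC.
Qed.

Lemma zspanB u v : zspan A u -> zspan A v -> zspan A (fun g => u g - v g).
Proof. by move=> Au Av; apply: zspanD Au (zspanN Av). Qed.

Lemma zspanZ (z : int) u : zspan A u -> zspan A (fun g => z * u g).
Proof.
have zspanZ_gen x : A x -> zspan A (fun g => z * x g).
  move=> Ax; suff zspanMn n : zspan A (fun g => n%:Z * x g).
    case: z => n; first exact: zspanMn.
    by apply: zspan_ext (zspanN (zspanMn n.+1)) _ => g; rewrite NegzE mulNr.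
  elim: n => [|n IHn]; first by apply: zspan_ext (zspan0 A) _ => g; rewrite mul0r.
  by apply: zspan_ext (zspan_add Ax IHn) _ => g; rewrite -add1n PoszD mulrDl mul1r.
elim=> [|x u' Ax _ IHu|x u' Ax _ IHu].
- by apply: zspan_ext (zspan0 A) _ => g; rewrite mulr0.
- by apply: zspan_ext (zspanD (zspanZ_gen x Ax) IHu) _ => g; rewrite mulrDr.
- by apply: zspan_ext (zspanB IHu (zspanZ_gen x Ax)) _ => g; rewrite mulrBr.
Qed.
End Zspan.

Lemma coef_cons (I : eqType) (x : I * int) l i :
  coef (x :: l) i = (if x.1 == i then x.2 else 0) + coef l i.
Proof. by rewrite /coef big_cons; case: ifP; rewrite ?add0r. Qed.

Section Group.
Variables (k : nat) (S : Type) (Lam : tup k S -> Prop) (a : tup k S -> nat -> int).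
Local Notation G := {classic (gen k S)}.
Implicit Types (l : seq (G * int)) (eta : tup k S).

Definition fab_of l : fab k S := fun h => coef l (h : G).

Lemma fab_of_cat l1 l2 h : fab_of (l1 ++ l2) h = fab_of l1 h + fab_of l2 h.
Proof. exact: coef_cat. Qed.

Lemma fab_of_scale z l h : fab_of (scale_fs z l) h = z * fab_of l h.
Proof. exact: coef_scale. Qed.

Lemma ebasE (g h : gen k S) : ebas g h = if (g : G) == h then 1 else 0.
Proof.
rewrite /ebas; case: pselect => [hg|hg]; case: eqP => // gh; first by case: gh.
by case: hg.
Qed.

Lemma zspan_fab_of (A : fab k S -> Prop) v : (forall x, A x -> exists g, x = ebas g) ->
  zspan A v -> exists l, v = fab_of l.
Proof.
move=> Aebas; elim=> [|x u /Aebas[g ->] _ [l ->]|x u /Aebas[g ->] _ [l ->]].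
- by exists [::]; apply/funext => h; rewrite /fab_of /coef big_nil.
- by exists ((g : G, 1) :: l); apply/funext => h; rewrite /fab_of coef_cons ebasE.
- exists (l ++ [:: (g : G, -1)]); apply/funext => h.
  by rewrite /fab_of coef_cat coef_cons ebasE /coef big_nil addr0; case: eqP.
Qed.

Lemma pairing_fab_of l1 l2 (w : G -> rat) : fab_of l1 = fab_of l2 -> pairing l1 w = pairing l2 w.
Proof.
move=> l12; have : pairing (l1 ++ scale_fs (-1) l2) w = 0.
  apply: pairing_coef0 => h; rewrite coef_cat coef_scale.
  by have /(congr1 (fun f => f h)) := l12; rewrite /fab_of => ->; rewrite mulN1r subrr.
by rewrite pairing_cat pairing_scale mulN1r => /eqP; rewrite subr_eq0 => /eqP.
Qed.

Definition fs_eval (A : Type) (v : A -> fab k S) (l : seq (A * int)) : fab k S :=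
  fun h => \sum_(x <- l) x.2 * v x.1 h.

Lemma fab_ofE l : fab_of l = fs_eval (fun g : G => ebas g) l.
Proof.
apply/funext => h; rewrite /fab_of /fs_eval /coef big_mkcond /=.
by apply: eq_bigr => x _; rewrite ebasE; case: eqP; rewrite ?mulr1 ?mulr0.
Qed.

Lemma fs_eval_cat (A : Type) (v : A -> fab k S) (l1 l2 : seq (A * int)) h :
  fs_eval v (l1 ++ l2) h = fs_eval v l1 h + fs_eval v l2 h.
Proof. by rewrite /fs_eval big_cat. Qed.

Lemma fs_eval_scale (A : Type) (v : A -> fab k S) z (l : seq (A * int)) h :
  fs_eval v (scale_fs z l) h = z * fs_eval v l h.
Proof. by rewrite /fs_eval big_map mulr_sumr; apply: eq_bigr => x _; rewrite mulrA. Qed.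

Lemma fs_eval_subst (A B : Type) (v : B -> fab k S) (f : A -> seq (B * int))
    (l : seq (A * int)) :
  fs_eval v (subst_fs f l) = fs_eval (fun x => fs_eval v (f x)) l.
Proof.
apply/funext => h; elim: l => [|x l IHl]; first by rewrite /fs_eval !big_nil.
by rewrite /subst_fs /= fs_eval_cat fs_eval_scale IHl [RHS]/fs_eval big_cons.
Qed.

Lemma Rsub_fs_eval (A : Type) (v1 v2 : A -> fab k S) (l : seq (A * int)) :
  (forall x, List.In x l -> Rsub Lam a (fun h => v1 x.1 h - v2 x.1 h)) ->
  Rsub Lam a (fun h => fs_eval v1 l h - fs_eval v2 l h).
Proof.
elim: l => [|x l IHl] lR.
  by apply: zspan_ext (zspan0 _) _ => h; rewrite /fs_eval !big_nil subrr.
apply: zspan_ext (zspanD (zspanZ x.2 (lR x (or_introl erefl)))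
  (IHl (fun y yl => lR y (or_intror yl)))) _ => h.
by rewrite /fs_eval !big_cons; ring.
Qed.

(* Kills every relation: the value [1/(0! 1! ... (n-1)!)] at [y_(eta,n)] is what makes
   [n! y_(eta,n+1) - y_(eta,n)] vanish, and every other generator is sent to [0]. *)
Definition y_weight eta (g : G) : rat :=
  if g is Gy eta' n then (if pselect (eta' = eta) then (fact_prod n)%:R^-1 else 0) else 0.

Definition rel_list eta n : seq (G * int) :=
  [:: (Gy eta n.+1 : G, (n`!)%:Z); (Gy eta n : G, -1); (Gz k S : G, - a eta n)] ++
  [seq (Gx (restr eta m n) : G, -1) | m <- index_enum 'I_k.+1].

Lemma fab_of_rel_list eta n : fab_of (rel_list eta n) = relvec a eta n.
Proof.
apply/funext => h; rewrite /fab_of /relvec coef_cat !coef_cons /coef big_nil big_map.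
rewrite big_mkcond -sumrN !ebasE /=; congr (_ + _).
  by case: eqP; case: eqP; case: eqP => * /=; ring.
by apply: eq_bigr => m _; rewrite ebasE; case: eqP; rewrite ?oppr0.
Qed.

Lemma pairing_rel_list eta' eta n : pairing (rel_list eta' n) (y_weight eta) = 0.
Proof.
rewrite /rel_list pairing_cat /pairing !big_cons big_nil big_map.
rewrite big1 => [|m _]; last by rewrite mulr0.
rewrite /= mulr0 !addr0; case: (pselect (eta' = eta)) => /= _; last by rewrite !mulr0 addr0.
rewrite fact_prodS natrM invfM mulrCA mulfV ?mulr1 ?mulN1r ?subrr //.
by rewrite pnatr_eq0 -lt0n fact_gt0.
Qed.

Lemma Rsub_fab_of eta v : Rsub Lam a v ->
  exists2 l, v = fab_of l & pairing l (y_weight eta) = 0.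
Proof.
elim=> [|x u [eta' [n [_ ->]]] _ [l -> l0]|x u [eta' [n [_ ->]]] _ [l -> l0]].
- exists [::]; first by apply/funext => h; rewrite /fab_of /coef big_nil.
  by rewrite /pairing big_nil.
- exists (rel_list eta' n ++ l).
    by rewrite -fab_of_rel_list; apply/funext => h; rewrite fab_of_cat.
  by rewrite pairing_cat pairing_rel_list l0 addr0.
- exists (l ++ scale_fs (-1) (rel_list eta' n)).
    by rewrite -fab_of_rel_list; apply/funext => h; rewrite fab_of_cat fab_of_scale mulN1r.
  by rewrite pairing_cat pairing_scale pairing_rel_list l0 mulr0 addr0.
Qed.
End Group.

Section Basis.
Variables (k : nat) (S : Type) (Lam : tup k S -> Prop) (a : tup k S -> nat -> int)
  (U : wseq S -> Prop) (I0 : Type) (b : I0 -> fab k S).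
Hypothesis Lam_full : forall eta, Lam eta.
Local Notation G := {classic (gen k S)}.
Local Notation I := {classic I0}.
Implicit Types (l : seq (I * int)) (eta : tup k S).

Lemma fs_eval_coef l : fs_eval b l = comb b (undup (map fst l)) (coef l).
Proof.
apply/funext => h; rewrite /fs_eval /comb (@big_group_fst _ _ _ l (undup (map fst l))).
- by apply: eq_bigr => i _; rewrite /coef mulr_suml; apply: eq_bigr => x /eqP ->.
- exact: undup_uniq.
- by move=> i; rewrite mem_undup.
Qed.

Lemma fs_eval_indep l :
  (forall s c, List.NoDup s -> Rsub Lam a (comb b s c) -> forall i, List.In i s -> c i = 0) ->
  Rsub Lam a (fs_eval b l) -> forall i, coef l i = 0.
Proof.
move=> b_indep lR i; case: (boolP (i \in undup (map fst l))) => il; last first.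
  by apply: coef_notin; rewrite mem_undup in il.
apply: (b_indep _ (coef l) (@uniq_NoDup I _ (undup_uniq (map fst l)))).
  by rewrite -fs_eval_coef.
exact: (mem_In il).
Qed.

Variable rep : I0 -> seq (G * int).
Hypothesis b_rep : forall i, b i = fab_of (rep i).

Definition basis_weight eta (i : I) : rat := pairing (rep i) (y_weight eta).

Definition gen_entries (g : gen k S) : seq (wseq S) :=
  if g is Gy eta _ then [seq eta m | m <- enum 'I_k.+1] else [::].

Definition basis_supp (i : I) : seq (wseq S) := flatten [seq gen_entries x.1 | x <- rep i].

Lemma basis_weight_supp eta i (l : 'I_k.+1) :
  basis_weight eta i != 0 -> List.In (eta l) (basis_supp i).
Proof.
move=> w0; apply: contrapT => eta_supp; case/eqP: w0.
rewrite /basis_weight /pairing big1_seq // => x /andP[_ xr].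
case: x xr => [[|nu|eta' n] c] //= xr; rewrite ?mulr0 //.
case: (pselect (eta' = eta)) => /= [eta'E|_]; last by rewrite mulr0.
case: eta_supp; rewrite /basis_supp.
elim: (rep i) xr => [//|y r IHr]; rewrite in_cons /= => /orP[/eqP <-|/IHr yr].
  by apply: List.in_or_app; left; rewrite /= eta'E; apply: In_map; rewrite mem_enum.
by apply: List.in_or_app; right.
Qed.

Lemma fs_eval_basis l : fs_eval b l = fab_of (subst_fs rep l).
Proof.
rewrite fab_ofE fs_eval_subst; apply/funext => h.
by apply: eq_bigr => x _; rewrite b_rep fab_ofE.
Qed.

Lemma rel_list_genU eta n x : all_in U eta -> List.In x (rel_list a eta n) ->
  zspan (genU Lam U) (ebas x.1).
Proof.
move=> Ueta xl; apply: zspan_gen; move: xl => /= [<-|[<-|[<-|xl]]].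
- by right; left; exists eta, n.+1.
- by right; left; exists eta, n.
- by left.
- by have [m _ ->] := In_mapP xl; right; right; exists eta, m, n.
Qed.

Variable coords : gen k S -> seq (I * int).
Hypothesis coords_spec : forall g, zspan (genU Lam U) (ebas g) ->
  Rsub Lam a (fun h => ebas g h - fs_eval b (coords g) h).

Lemma Rsub_coords_rel eta n : all_in U eta ->
  Rsub Lam a (fs_eval b (subst_fs coords (rel_list a eta n))).
Proof.
move=> Ueta; have relR : Rsub Lam a (relvec a eta n) by apply: zspan_gen; exists eta, n.
have : Rsub Lam a (fun h => fab_of (rel_list a eta n) h
                            - fs_eval b (subst_fs coords (rel_list a eta n)) h).
  rewrite fab_ofE fs_eval_subst; apply: Rsub_fs_eval => x xl.
  exact/coords_spec/(rel_list_genU Ueta xl).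
rewrite fab_of_rel_list => /(zspanB relR) relR'; apply: zspan_ext relR' _ => h.
by rewrite opprB addrC subrK.
Qed.

Hypothesis b_indep : forall s c, List.NoDup s -> Rsub Lam a (comb b s c) ->
  forall i, List.In i s -> c i = 0.

Lemma coords_relation eta n i : all_in U eta ->
  (n`!)%:Z * coef (coords (Gy eta n.+1)) i
    = coef (coords (Gy eta n)) i + a eta n * coef (coords (Gz k S)) i
      + \sum_(m < k.+1) coef (coords (Gx (restr eta m n))) i.
Proof.
move=> Ueta; have := fs_eval_indep b_indep (Rsub_coords_rel n Ueta) i.
rewrite coef_subst big_cat !big_cons big_nil big_map /=.
under eq_bigr do rewrite mulN1r.
by rewrite sumrN => rel0; apply/eqP; rewrite -subr_eq0; apply/eqP; rewrite -[RHS]rel0; ring.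
Qed.

Lemma coords_norm eta : all_in U eta -> pairing (coords (Gy eta 0)) (basis_weight eta) = 1.
Proof.
move=> Ueta; have y0gen : zspan (genU Lam U) (ebas (Gy eta 0)).
  by apply: zspan_gen; right; left; exists eta, 0%N.
have [l y0E l0] := Rsub_fab_of eta (coords_spec y0gen).
pose L := subst_fs rep (coords (Gy eta 0)).
have : pairing ((Gy eta 0 : G, 1) :: scale_fs (-1) L) (y_weight eta) = 0.
  rewrite -l0; apply: pairing_fab_of; rewrite -y0E fs_eval_basis.
  apply/funext => h; rewrite -cat1s fab_of_cat fab_of_scale mulN1r /fab_of coef_cons ebasE.
  by rewrite /coef big_nil addr0.
rewrite -cat1s pairing_cat pairing_scale {1}/pairing big_cons big_nil /= addr0.
case: (pselect (eta = eta)) => //= _.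
rewrite /fact_prod big_ord0 invr1 mulr1 mulN1r /L pairing_subst => /eqP.
by rewrite subr_eq0 => /eqP.
Qed.

Lemma expansion_of_basis : expansion U (fun eta n => coords (Gy eta n)) (fun nu => coords (Gx nu))
  (coords (Gz k S)) a basis_weight basis_supp.
Proof.
split=> [eta Ueta n i|eta Ueta|eta i Ueta wi l].
- exact: coords_relation.
- exact: coords_norm.
- exact: basis_weight_supp.
Qed.
End Basis.

Lemma genU_ebas k S (Lam : tup k S -> Prop) U x : genU Lam U x -> exists g, x = ebas g.
Proof. by move=> [->|[[eta [n [_ [_ ->]]]]|[eta [m [n [_ [_ ->]]]]]]]; eexists. Qed.

Lemma exists_coords k S (Lam : tup k S -> Prop) a U I0 (b : I0 -> fab k S) :
  (forall u, zspan (genU Lam U) u ->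
     exists (s : list I0) (c : I0 -> int), Rsub Lam a (fun g => u g - comb b s c g)) ->
  forall g, exists l : seq ({classic I0} * int), zspan (genU Lam U) (ebas g) ->
    Rsub Lam a (fun h => ebas g h - fs_eval b l h).
Proof.
move=> b_gen g; case: (pselect (zspan (genU Lam U) (ebas g))) => [/b_gen[s [c gR]]|ng].
  exists [seq (i, c i) | i <- s] => _; apply: zspan_ext gR _ => h.
  by rewrite /fs_eval /comb big_map.
by exists [::] => /ng.
Qed.

Theorem claim1p14 (k : nat) (S : Type) (Lam : tup k S -> Prop)
  (a : tup k S -> nat -> int)
  (Hfull : forall eta : tup k S, Lam eta)
  (U : wseq S -> Prop)
  (HU : card_ge_succ k.+1 U) :
  ~ GU_free Lam a U.
Proof.
move=> [I0 [b [b_span [b_gen b_indep]]]].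
have /choice[rep b_rep] : forall i, exists l, b i = fab_of l.
  by move=> i; apply: zspan_fab_of (b_span i) => x /genU_ebas.
have /choice[coords coords_spec] := exists_coords b_gen.
exact: expansion_succ_card (expansion_of_basis Hfull b_rep coords_spec b_indep) HU.
Qed.
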